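(* Let $\mathsf P$ be a one-move rider with basic move $(c,d)$ and let $\mathcal B$ be a board. The denominator of the inside-out polytope $(\mathcal B^q,\mathcal A_{\mathsf P})$ equals the least common denominator of the corners of $\mathcal B$ when $q=1$, and when $q\ge2$ it equals the least common denominator of the corners of $\mathcal B$ and their antipodes.
   Context: A board $\mathcal B$ is a convex polygon in $\mathbb R^2$ with rational corners (vertices). A one-move rider has a single basic move $(c,d)\in\mathbb Z^2\setminus\{0\}$ with $\gcd(c,d)=1$. For $q$ pieces, $\mathcal A_{\mathsf P}$ is the arrangement in $\mathbb R^{2q}$ of hyperplanes $\mathcal H_{ij}=\{(z_1,\dots,z_q):(z_j-z_i)\cdot(d,-c)=0\}$, $1\le i<j\le q$. A vertex of $(\mathcal B^q,\mathcal A_{\mathsf P})$ is a point of $\mathcal B^q$ that is the unique point of an intersection of some of these hyperplanes and some affine hulls of facets of $\mathcal B^q$; the denominator of $(\mathcal B^q,\mathcal A_{\mathsf P})$ is the least common multiple of the least common denominators of the coordinates of its vertices. For a corner $z$ of $\mathcal B$, its antipode is the other point (if any) where the line through $z$ parallel to $(c,d)$ meets the boundary of $\mathcal B$ (possibly another corner); if $(c,d)$ is parallel to an edge $z_iz_j$ of $\mathcal B$, the corners $z_i$ and $z_j$ are each other's antipodes. The least common denominator of a set of rational points is the least common multiple of the denominators of all their coordinates. *)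

From HB Require Import structures.
From mathcomp Require Import all_boot all_order all_algebra.
Set Implicit Arguments. Unset Strict Implicit. Unset Printing Implicit Defensive.
Import Order.TTheory GRing.Theory Num.Theory.
Local Open Scope ring_scope.

Definition pt := (rat * rat)%type.
Definition subp (u v : pt) : pt := (u.1 - v.1, u.2 - v.2).
Definition dotp (u v : pt) : rat := u.1 * v.1 + u.2 * v.2.
Definition cross (u v : pt) : rat := u.1 * v.2 - u.2 * v.1.

Definition in_hull (cs : seq pt) (x : pt) : Prop :=
  exists l : 'I_(size cs) -> rat,
    (forall k, 0 <= l k) /\ \sum_(k < size cs) l k = 1 /\
    x.1 = \sum_(k < size cs) l k * (nth (0, 0) cs k).1 /\
    x.2 = \sum_(k < size cs) l k * (nth (0, 0) cs k).2.

(* cs is the list of corners of a board: a (2-dimensional) convex polygon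
   with rational corners; the board is conv(cs) and the corners are exactly
   the extreme points, listed without repetition. *)
Definition is_board (cs : seq pt) : Prop :=
  uniq cs /\
  (forall z, z \in cs -> ~ in_hull [seq y <- cs | y != z] z) /\
  (exists a b e, [/\ a \in cs, b \in cs, e \in cs &
                   cross (subp b a) (subp e a) != 0]).

(* [a b] is an edge of the board (oriented so the board lies to its left). *)
Definition edge (cs : seq pt) (a b : pt) : Prop :=
  [/\ a \in cs, b \in cs, a != b &
      forall y, y \in cs -> 0 <= cross (subp b a) (subp y a)].

Definition mv (c d : int) : pt := (c%:~R, d%:~R).

(* Constraints of the inside-out polytope (B^q, A_P):
   CH i j   : the hyperplane H_ij  {(z_j - z_i).(d,-c) = 0}  (valid if i < j)
   CF i a b : the affine hull of the facet of B^q where z_i lies in edge [a b],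
              i.e. { cross (b - a) (z_i - a) = 0 }. *)
Inductive constr (q : nat) :=
| CH of 'I_q & 'I_q
| CF of 'I_q & pt & pt.

Definition cvalid (cs : seq pt) (q : nat) (k : constr q) : Prop :=
  match k with
  | CH i j => (i < j)%N
  | CF _ a b => edge cs a b
  end.

Definition cholds (c d : int) (q : nat) (k : constr q) (z : 'I_q -> pt) : Prop :=
  match k with
  | CH i j => dotp (subp (z j) (z i)) (d%:~R, - c%:~R) = 0
  | CF i a b => cross (subp b a) (subp (z i) a) = 0
  end.

(* z is a vertex of (B^q, A_P): z in B^q and z is the unique point of the
   intersection of some family S of the above hyperplanes / facet hulls. *)
Definition is_vertex (c d : int) (cs : seq pt) (q : nat) (z : 'I_q -> pt) : Prop :=
  (forall i, in_hull cs (z i)) /\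
  exists S : constr q -> Prop,
    (forall k, S k -> cvalid cs k) /\
    (forall w : 'I_q -> pt,
        (forall k, S k -> cholds c d k w) <-> (forall i, w i = z i)).

Definition den2 (p : pt) : nat := lcmn `|denq p.1|%N `|denq p.2|%N.
Definition denq_cfg (q : nat) (z : 'I_q -> pt) : nat :=
  \big[lcmn/1%N]_(i < q) den2 (z i).

Definition lcm_of (P : nat -> Prop) (D : nat) : Prop :=
  forall m, (D %| m)%N <-> (forall n, P n -> (n %| m)%N).

Definition on_boundary (cs : seq pt) (p : pt) : Prop :=
  in_hull cs p /\ exists a b, edge cs a b /\ cross (subp b a) (subp p a) = 0.

Definition par_edge (c d : int) (cs : seq pt) (z z' : pt) : Prop :=
  (edge cs z z' \/ edge cs z' z) /\ cross (subp z' z) (mv c d) = 0.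

Definition antipode (c d : int) (cs : seq pt) (z p : pt) : Prop :=
  par_edge c d cs z p \/
  ((~ exists z', par_edge c d cs z z') /\
   on_boundary cs p /\ p <> z /\ cross (subp p z) (mv c d) = 0).

(* A vertex is pinned by its constraints, so no piece can slide. Hence every
   piece lies on a facet line transversal to the move (otherwise that piece alone
   slides along the move), and every class of pieces linked by move-lines
   contains a piece at a corner (otherwise the whole class slides along its
   transversal facets, preserving the move-lines between its pieces). So every
   coordinate point of a vertex is a corner, or lies on a move-line through a
   corner and on a transversal edge, i.e. is an antipode of that corner; the
   latter needs a second piece. Conversely a corner, pinned by its two edges, is
   a piece of a vertex, and an antipode [p] of a corner [z] is pinned by its edge
   and the hyperplane joining it to a piece at [z]. Thus both families of
   denominators have the same common multiples. *)

From Stdlib Require Import Classical ClassicalEpsilon.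
From HB Require Import structures.
From mathcomp Require Import all_boot all_order all_algebra.
From mathcomp Require Import ring lra.
Import Order.TTheory GRing.Theory Num.Theory.
Local Open Scope ring_scope.
Set Implicit Arguments. Unset Strict Implicit. Unset Printing Implicit Defensive.

Lemma pt_ext (x y : pt) : x.1 = y.1 -> x.2 = y.2 -> x = y.
Proof. by case: x y => [x1 x2] [y1 y2] /= -> ->. Qed.

Lemma subp0_eq (y p : pt) : subp y p = (0, 0) -> y = p.
Proof. by case: y p => [y1 y2] [p1 p2] [/subr0_eq -> /subr0_eq ->]. Qed.

Lemma subp_neq0 (y p : pt) : y != p -> subp y p != (0, 0).
Proof. by apply: contraNneq => /subp0_eq ->. Qed.

Lemma crossC (u w : pt) : cross u w = - cross w u.
Proof. by rewrite /cross; ring. Qed.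

Lemma crossvv (u : pt) : cross u u = 0.
Proof. by rewrite /cross; ring. Qed.

Lemma cross_subpl (u x y : pt) : cross (subp u x) y = cross u y - cross x y.
Proof. by rewrite /cross /subp /=; ring. Qed.

Lemma cross_subp_rebase (u y p a : pt) :
  cross u (subp y p) = cross u (subp y a) - cross u (subp p a).
Proof. by rewrite /cross /subp /=; ring. Qed.

Lemma dotp_normal_mv (c d : int) (x : pt) :
  dotp x (d%:~R, - c%:~R) = cross x (mv c d).
Proof. by rewrite /dotp /cross /mv /=; ring. Qed.

Lemma mv_neq0 (c d : int) : coprimez c d -> mv c d != (0, 0).
Proof.
by apply: contraTneq => -[/eqP + /eqP]; rewrite !intr_eq0 => /eqP-> /eqP->.
Qed.

Lemma cross_eq0_trans (u x y : pt) :
  u != (0, 0) -> cross u x = 0 -> cross u y = 0 -> cross x y = 0.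
Proof.
case: u x y => [u1 u2] [x1 x2] [y1 y2]; rewrite /cross /= => u0 hx hy.
have e1 : u1 * (x1 * y2 - x2 * y1) =
          x1 * (u1 * y2 - u2 * y1) - y1 * (u1 * x2 - u2 * x1) by ring.
have e2 : u2 * (x1 * y2 - x2 * y1) =
          x2 * (u1 * y2 - u2 * y1) - y2 * (u1 * x2 - u2 * x1) by ring.
rewrite hx hy !mulr0 subr0 in e1 e2.
have [u1_0|u1_neq0] := eqVneq u1 0; last by move/eqP: e1; rewrite mulf_eq0 (negbTE u1_neq0) => /eqP.
have [u2_0|u2_neq0] := eqVneq u2 0; last by move/eqP: e2; rewrite mulf_eq0 (negbTE u2_neq0) => /eqP.
by move: u0; rewrite u1_0 u2_0 eqxx.
Qed.

Lemma cross2_eq0 (u u' w : pt) :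
  cross u u' != 0 -> cross u w = 0 -> cross u' w = 0 -> w = (0, 0).
Proof.
case: u u' w => [u1 u2] [v1 v2] [w1 w2]; rewrite /cross /= => uu' h1 h2.
have e1 : w1 * (u1 * v2 - u2 * v1) = v1 * (u1 * w2 - u2 * w1) - u1 * (v1 * w2 - v2 * w1) by ring.
have e2 : w2 * (u1 * v2 - u2 * v1) = v2 * (u1 * w2 - u2 * w1) - u2 * (v1 * w2 - v2 * w1) by ring.
rewrite h1 h2 !mulr0 subr0 in e1 e2.
move/eqP: e1; rewrite mulf_eq0 (negbTE uu') orbF => /eqP ->.
by move/eqP: e2; rewrite mulf_eq0 (negbTE uu') orbF => /eqP ->.
Qed.

Lemma meet_lines_uniq (u u' a a' x y : pt) : cross u u' != 0 ->
  cross u (subp x a) = 0 -> cross u' (subp x a') = 0 ->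
  cross u (subp y a) = 0 -> cross u' (subp y a') = 0 -> x = y.
Proof.
move=> uu' hx hx' hy hy'; apply/subp0_eq/(cross2_eq0 uu').
  by rewrite (cross_subp_rebase _ _ _ a) hx hy subr0.
by rewrite (cross_subp_rebase _ _ _ a') hx' hy' subr0.
Qed.

Lemma dotpp_gt0 (w : pt) : w != (0, 0) -> 0 < dotp w w.
Proof.
case: w => [w1 w2]; rewrite /dotp /= => w_neq0.
have w1w1_ge0 : 0 <= w1 * w1 by rewrite -expr2 sqr_ge0.
have w2w2_ge0 : 0 <= w2 * w2 by rewrite -expr2 sqr_ge0.
rewrite lt_def paddr_eq0 // !mulf_eq0 !orbb addr_ge0 // andbT.
by apply: contra w_neq0 => /andP[/eqP-> /eqP->].
Qed.

Lemma parallel_decomp (u w : pt) : cross u w = 0 ->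
  dotp w w * u.1 = dotp u w * w.1 /\ dotp w w * u.2 = dotp u w * w.2.
Proof.
case: u w => [u1 u2] [w1 w2]; rewrite /cross /dotp /= => h; split.
  have -> : (w1 * w1 + w2 * w2) * u1 = (u1 * w1 + u2 * w2) * w1 + w2 * (u1 * w2 - u2 * w1) by ring.
  by rewrite h mulr0 addr0.
have -> : (w1 * w1 + w2 * w2) * u2 = (u1 * w1 + u2 * w2) * w2 - w1 * (u1 * w2 - u2 * w1) by ring.
by rewrite h mulr0 subr0.
Qed.

Lemma parallel_cross (u w x : pt) : cross u w = 0 ->
  dotp w w * cross u x = dotp u w * cross w x.
Proof.
move/parallel_decomp; case: u w x => [u1 u2] [w1 w2] [x1 x2].
rewrite /cross /dotp /= => -[e1 e2].
transitivity (((w1 * w1 + w2 * w2) * u1) * x2 - ((w1 * w1 + w2 * w2) * u2) * x1); first by ring.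
by rewrite e1 e2; ring.
Qed.

Lemma in_hull3 (s : seq pt) (y1 y2 y3 : pt) (w1 w2 w3 : rat) (x : pt) :
  y1 \in s -> y2 \in s -> y3 \in s -> 0 <= w1 -> 0 <= w2 -> 0 <= w3 ->
  w1 + w2 + w3 = 1 ->
  x.1 = w1 * y1.1 + w2 * y2.1 + w3 * y3.1 ->
  x.2 = w1 * y1.2 + w2 * y2.2 + w3 * y3.2 -> in_hull s x.
Proof.
move=> s_y1 s_y2 s_y3 w1_ge0 w2_ge0 w3_ge0 sum_w x1E x2E.
pose i1 := Ordinal (etrans (index_mem y1 s) s_y1).
pose i2 := Ordinal (etrans (index_mem y2 s) s_y2).
pose i3 := Ordinal (etrans (index_mem y3 s) s_y3).
have [n1 n2 n3] : [/\ nth (0, 0) s i1 = y1, nth (0, 0) s i2 = y2 & nth (0, 0) s i3 = y3].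
  by rewrite /= !nth_index.
have sum_delta (i : 'I_(size s)) (F : 'I_(size s) -> rat) :
    \sum_(k < size s) (k == i)%:R * F k = F i.
  rewrite (bigD1 i) //= eqxx mul1r big1 ?addr0 // => k /negbTE ->.
  by rewrite mul0r.
pose l k := (k == i1)%:R * w1 + (k == i2)%:R * w2 + (k == i3)%:R * w3.
have sum_l F : \sum_(k < size s) l k * F k = w1 * F i1 + w2 * F i2 + w3 * F i3.
  rewrite -(sum_delta i1) -(sum_delta i2) -(sum_delta i3) !mulr_sumr -!big_split /=.
  by apply: eq_bigr => k _; rewrite /l; ring.
exists l; split; first by move=> k; rewrite !addr_ge0 // mulr_ge0 // ler0n.
split.
  by have := sum_l (fun _ => 1); rewrite !mulr1 sum_w => <-; apply: eq_bigr => k; rewrite mulr1.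
rewrite (sum_l (fun k => (nth (0, 0) s k).1)) (sum_l (fun k => (nth (0, 0) s k).2)).
by rewrite /= n1 n2 n3.
Qed.

Lemma in_hull_mem (cs : seq pt) (p : pt) : p \in cs -> in_hull cs p.
Proof.
by move=> cs_p; apply: (in_hull3 (w1 := 1) (w2 := 0) (w3 := 0) cs_p cs_p cs_p) => //=; ring.
Qed.

Lemma convex_comb_affine (s : seq pt) (x : pt) (al be ga : rat) (l : 'I_(size s) -> rat) :
  \sum_(k < size s) l k = 1 ->
  x.1 = \sum_(k < size s) l k * (nth (0, 0) s k).1 ->
  x.2 = \sum_(k < size s) l k * (nth (0, 0) s k).2 ->
  \sum_(k < size s) l k * (al * (nth (0, 0) s k).1 + be * (nth (0, 0) s k).2 + ga)
   = al * x.1 + be * x.2 + ga.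
Proof.
move=> sum_l x1E x2E.
transitivity (al * x.1 + be * x.2 + ga * \sum_(k < size s) l k); last by rewrite sum_l mulr1.
rewrite x1E x2E !mulr_sumr -!big_split /=.
by apply: eq_bigr => k _; ring.
Qed.

Lemma cross_affine (a b y : pt) : cross (subp b a) (subp y a) =
  - (b.2 - a.2) * y.1 + (b.1 - a.1) * y.2 + ((b.2 - a.2) * a.1 - (b.1 - a.1) * a.2).
Proof. by rewrite /cross /subp /=; ring. Qed.

(* Every point of positive weight in a convex combination landing on the line
   of an edge lies on that line, since the whole board is on one side of it. *)
Lemma edge_line_support (cs : seq pt) (p a b : pt) (l : 'I_(size cs) -> rat) :
  edge cs a b -> (forall k, 0 <= l k) -> \sum_(k < size cs) l k = 1 ->
  p.1 = \sum_(k < size cs) l k * (nth (0, 0) cs k).1 ->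
  p.2 = \sum_(k < size cs) l k * (nth (0, 0) cs k).2 ->
  cross (subp b a) (subp p a) = 0 ->
  forall k, 0 < l k -> cross (subp b a) (subp (nth (0, 0) cs k) a) = 0.
Proof.
move=> [_ _ _ side] l_ge0 sum_l p1E p2E p_on k l_gt0.
have sum_cross : \sum_(k < size cs) l k * cross (subp b a) (subp (nth (0, 0) cs k) a) = 0.
  rewrite -[RHS]p_on cross_affine -(convex_comb_affine _ _ _ sum_l p1E p2E).
  by apply: eq_bigr => j _; rewrite cross_affine.
have term_ge0 j : true -> 0 <= l j * cross (subp b a) (subp (nth (0, 0) cs j) a).
  by move=> _; rewrite mulr_ge0 // side // mem_nth.
have /eqP := psumr_eq0P term_ge0 sum_cross (i := k) isT.
by rewrite mulf_eq0 gt_eqF // => /eqP.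
Qed.

Lemma corner_of_edge_lines (cs : seq pt) (p a b a' b' : pt) :
  edge cs a b -> edge cs a' b' -> cross (subp b a) (subp b' a') != 0 ->
  in_hull cs p -> cross (subp b a) (subp p a) = 0 -> cross (subp b' a') (subp p a') = 0 ->
  p \in cs.
Proof.
move=> ab a'b' not_par [l [l_ge0 [sum_l [p1E p2E]]]] p_ab p_a'b'.
have [k l_gt0] : exists k, 0 < l k.
  apply: NNPP => no_pos; move: sum_l; rewrite big1 => [/eqP|k _]; first by rewrite eq_sym oner_eq0.
  by apply/eqP; rewrite eq_le l_ge0 andbT leNgt; apply/negP => ?; apply: no_pos; exists k.
have := edge_line_support ab l_ge0 sum_l p1E p2E p_ab l_gt0.
have := edge_line_support a'b' l_ge0 sum_l p1E p2E p_a'b' l_gt0.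
move=> k_a'b' k_ab; rewrite -(meet_lines_uniq not_par k_ab k_a'b' p_ab p_a'b').
exact: mem_nth.
Qed.

Lemma cross_subpp (u p : pt) : cross u (subp p p) = 0.
Proof. by rewrite /cross /subp /=; ring. Qed.

(* The three orientation conditions place [p] inside the triangle [b y0 y]. *)
Lemma in_hull_of_orientations (T : seq pt) (p b y0 y : pt) (sg : rat) :
  b \in T -> y0 \in T -> y \in T ->
  sg * cross (subp b p) (subp y0 p) < 0 ->
  sg * cross (subp y0 p) (subp y p) < 0 ->
  0 <= sg * cross (subp b p) (subp y p) -> in_hull T p.
Proof.
move=> T_b T_y0 T_y h1 h2 h3.
set al := sg * cross (subp y0 p) (subp y p).
set be := - (sg * cross (subp b p) (subp y p)).
set ga := sg * cross (subp b p) (subp y0 p).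
have S_lt0 : al + be + ga < 0 by move: h1 h2 h3; rewrite /al /be /ga; lra.
have S_neq0 : al + be + ga != 0 by rewrite lt_eqF.
have E1 : al * b.1 + be * y0.1 + ga * y.1 = (al + be + ga) * p.1.
  by rewrite /al /be /ga /cross /subp /=; ring.
have E2 : al * b.2 + be * y0.2 + ga * y.2 = (al + be + ga) * p.2.
  by rewrite /al /be /ga /cross /subp /=; ring.
apply: (in_hull3 (w1 := al / (al + be + ga)) (w2 := be / (al + be + ga))
                 (w3 := ga / (al + be + ga)) T_b T_y0 T_y).
- by rewrite mulr_le0 // ?invr_le0 ltW.
- by rewrite mulr_le0 // ?invr_le0 ?oppr_le0 // ltW.
- by rewrite mulr_le0 // ?invr_le0 ltW.
- by field.
- by apply: (mulfI S_neq0); rewrite -E1; field.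
- by apply: (mulfI S_neq0); rewrite -E2; field.
Qed.

Lemma exists_extreme_dir (T s : seq pt) (p : pt) (sg : rat) :
  {subset s <= T} -> s != [::] -> ~ in_hull T p ->
  exists2 b, b \in s & forall y, y \in s -> 0 <= sg * cross (subp b p) (subp y p).
Proof.
elim: s => [|y0 s IH] // sub_s _ not_hull.
have [->|s_neq0] := eqVneq s [::].
  by exists y0 => [|y]; rewrite ?inE // => /eqP ->; rewrite crossvv mulr0.
have sub_s' : {subset s <= T} by move=> y s_y; apply: sub_s; rewrite inE s_y orbT.
have [b s_b ext_b] := IH sub_s' s_neq0 not_hull.
have [b_y0|y0_b] := leP 0 (sg * cross (subp b p) (subp y0 p)).
  exists b => [|y]; first by rewrite inE s_b orbT.
  by rewrite inE => /predU1P [->|/ext_b].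
exists y0 => [|y]; first exact: mem_head.
rewrite inE => /predU1P [->|s_y]; first by rewrite crossvv mulr0.
rewrite leNgt; apply/negP => y_y0; apply: not_hull.
apply: (in_hull_of_orientations (b := b) (y0 := y0) (y := y) (sg := sg)) => //.
- exact: sub_s'.
- exact/sub_s/mem_head.
- exact: sub_s'.
- exact: ext_b.
Qed.

Lemma in_hull_between (T : seq pt) (p b1 b2 : pt) :
  b1 \in T -> b2 \in T -> b2 != p ->
  cross (subp b1 p) (subp b2 p) = 0 -> dotp (subp b1 p) (subp b2 p) < 0 ->
  in_hull T p.
Proof.
move=> T_b1 T_b2 b2_neq_p; set u := subp b1 p; set w := subp b2 p => uw_par uw_lt0.
have [e1 e2] := parallel_decomp uw_par.
have ww_gt0 := dotpp_gt0 (subp_neq0 b2_neq_p).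
have S_gt0 : 0 < dotp w w - dotp u w by lra.
have S_neq0 : dotp w w - dotp u w != 0 by rewrite gt_eqF.
apply: (in_hull3 (w1 := dotp w w / (dotp w w - dotp u w))
                 (w2 := - dotp u w / (dotp w w - dotp u w)) (w3 := 0) T_b1 T_b2 T_b2).
- by rewrite divr_ge0 // ltW.
- by rewrite divr_ge0 ?oppr_ge0 // ltW.
- by [].
- by field.
- apply: (mulfI S_neq0); rewrite mul0r addr0.
  transitivity (dotp w w * b1.1 - dotp u w * b2.1); last by field.
  by move: e1; rewrite /u /w /subp /=; lra.
- apply: (mulfI S_neq0); rewrite mul0r addr0.
  transitivity (dotp w w * b1.2 - dotp u w * b2.2); last by field.
  by move: e2; rewrite /u /w /subp /=; lra.
Qed.

Lemma board_not_collinear (cs : seq pt) (p u : pt) : is_board cs -> u != (0, 0) ->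
  ~ (forall y, y \in cs -> cross u (subp y p) = 0).
Proof.
move=> [_ [_ [a [b [e [cs_a cs_b cs_e nondeg]]]]]] u_neq0 collinear.
have par y y' : y \in cs -> y' \in cs -> cross (subp y p) (subp y' p) = 0.
  by move=> cs_y cs_y'; apply: (cross_eq0_trans u_neq0); apply: collinear.
move: nondeg; have -> : cross (subp b a) (subp e a) =
  cross (subp b p) (subp e p) - cross (subp b p) (subp a p) - cross (subp a p) (subp e p).
  by rewrite /cross /subp /=; ring.
by rewrite !par // !subr0 eqxx.
Qed.

Section Corner.
Variables (cs : seq pt) (p : pt).
Hypotheses (board : is_board cs) (cs_p : p \in cs).

Lemma corner_not_in_hull_others : ~ in_hull [seq y <- cs | y != p] p.
Proof. by case: board => _ [extreme _]; apply: extreme. Qed.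

Lemma corner_extreme_neighbour (sg : rat) : exists b, [/\ b \in cs, b != p &
  forall y, y \in cs -> 0 <= sg * cross (subp b p) (subp y p)].
Proof.
set T := [seq y <- cs | y != p].
have T_neq0 : T != [::].
  case: board => _ [_ [a [b [e [cs_a cs_b cs_e]]]]].
  apply: contra_neqN => /eqP T0.
  have only_p y : y \in cs -> y = p.
    move=> cs_y; apply/eqP; apply: contraT => y_neq_p.
    have : y \in T by rewrite mem_filter y_neq_p cs_y.
    by rewrite T0.
  by rewrite (only_p a cs_a) (only_p b cs_b) (only_p e cs_e) crossvv.
have [b] := exists_extreme_dir sg (fun y (T_y : y \in T) => T_y) T_neq0 corner_not_in_hull_others.
rewrite mem_filter => /andP [b_neq_p cs_b] ext_b; exists b; split => // y cs_y.
have [->|y_neq_p] := eqVneq y p; first by rewrite cross_subpp mulr0.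
by apply: ext_b; rewrite mem_filter y_neq_p.
Qed.

Lemma corner_edge_out : exists b, edge cs p b.
Proof.
have [b [cs_b b_neq_p side]] := corner_extreme_neighbour 1.
by exists b; split; rewrite // 1?eq_sym // => y /side; rewrite mul1r.
Qed.

Lemma corner_edge_in : exists b, edge cs b p.
Proof.
have [b [cs_b b_neq_p side]] := corner_extreme_neighbour (-1).
exists b; split => // y /side.
by rewrite /cross /subp /=; lra.
Qed.

Lemma corner_edges_not_parallel (b1 b2 : pt) :
  edge cs p b1 -> edge cs b2 p -> cross (subp b1 p) (subp p b2) != 0.
Proof.
move=> [_ cs_b1 p_neq_b1 side1] [cs_b2 _ b2_neq_p side2].
have -> : cross (subp b1 p) (subp p b2) = - cross (subp b1 p) (subp b2 p).
  by rewrite /cross /subp /=; ring.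
rewrite oppr_eq0; apply/eqP => par.
have [uw_lt0|uw_ge0] := ltP (dotp (subp b1 p) (subp b2 p)) 0.
  apply: corner_not_in_hull_others; apply: (in_hull_between _ _ b2_neq_p par uw_lt0).
    by rewrite mem_filter eq_sym p_neq_b1.
  by rewrite mem_filter b2_neq_p.
have b1_neq_p : b1 != p by rewrite eq_sym.
apply: (board_not_collinear (p := p) board (subp_neq0 b1_neq_p)) => y cs_y.
have side2' : cross (subp b2 p) (subp y p) <= 0.
  by move: (side2 y cs_y); rewrite /cross /subp /=; lra.
have ww_gt0 := dotpp_gt0 (subp_neq0 b2_neq_p).
have : dotp (subp b2 p) (subp b2 p) * cross (subp b1 p) (subp y p) <= 0.
  by rewrite (parallel_cross _ par) mulr_ge0_le0.
by rewrite pmulr_rle0 // => le0; apply/eqP; rewrite eq_le le0 side1.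
Qed.

Lemma corner_two_edges : exists a b a' b', [/\ edge cs a b, edge cs a' b',
  cross (subp b a) (subp b' a') != 0,
  cross (subp b a) (subp p a) = 0 & cross (subp b' a') (subp p a') = 0].
Proof.
have [b1 out_b1] := corner_edge_out; have [b2 in_b2] := corner_edge_in.
exists p, b1, b2, p; split => //; last exact: crossvv.
  exact: corner_edges_not_parallel.
exact: cross_subpp.
Qed.

End Corner.

Lemma ex_minn_prop (M : nat -> Prop) :
  (exists m, M m) -> exists2 m, M m & forall n, M n -> (m <= n)%N.
Proof.
move=> exM; pose b n : bool := excluded_middle_informative (M n).
have bP n : reflect (M n) (b n).
  by rewrite /b; case: excluded_middle_informative => h; constructor.
have exb : exists n, b n by case: exM => n /bP; exists n.
by case: (ex_minnP exb) => m /bP Mm m_min; exists m => // n /bP /m_min.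
Qed.

(* The least positive common multiple if there is one, and [0] otherwise. *)
Lemma lcm_of_exists (P : nat -> Prop) : exists D, lcm_of P D.
Proof.
pose common m := forall n, P n -> (n %| m)%N.
have [exM|noM] := classic (exists m, (0 < m)%N /\ common m); last first.
  exists 0%N => m; rewrite dvd0n; split => [/eqP -> n _|common_m]; first exact: dvdn0.
  apply/eqP; apply: NNPP => m_neq0; apply: noM; exists m; split => //.
  by rewrite lt0n; apply/eqP.
have [D [D_gt0 common_D] D_min] := ex_minn_prop exM.
exists D => m; split => [D_m n /common_D n_D|common_m]; first exact: dvdn_trans D_m.
have [->|m_gt0] := posnP m; first exact: dvdn0.
have g_gt0 : (0 < gcdn D m)%N by rewrite gcdn_gt0 D_gt0.
have common_g : common (gcdn D m) by move=> n Pn; rewrite dvdn_gcd common_D ?common_m.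
have D_le_g := D_min _ (conj g_gt0 common_g).
have g_le_D : (gcdn D m <= D)%N by rewrite dvdn_leq ?dvdn_gcdl.
have <- : gcdn D m = D by apply/eqP; rewrite eqn_leq g_le_D D_le_g.
exact: dvdn_gcdr.
Qed.

Lemma den2_dvd_denq_cfg (q : nat) (z : 'I_q -> pt) (i : 'I_q) :
  (den2 (z i) %| denq_cfg z)%N.
Proof. exact: (biglcmn_sup i). Qed.

Section BoardAndMove.
Variables (c d : int) (cs : seq pt).
Hypothesis board : is_board cs.

Lemma const_corner_vertex (q : nat) (p : pt) :
  p \in cs -> is_vertex c d cs (fun _ : 'I_q => p).
Proof.
move=> cs_p; have [a [b [a' [b' [ab a'b' not_par p_ab p_a'b']]]]] := corner_two_edges board cs_p.
split=> [_|]; first exact: in_hull_mem.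
exists (fun k => if k is CF _ x y then (x, y) = (a, b) \/ (x, y) = (a', b') else False).
split; first by case => // i x y /= [[-> ->]|[-> ->]].
move=> w; split => [w_sat i|w_eq]; last by case => // i x y /= [[-> ->]|[-> ->]]; rewrite w_eq.
apply: (meet_lines_uniq not_par _ _ p_ab p_a'b').
  exact: (w_sat (CF i a b) (or_introl erefl)).
exact: (w_sat (CF i a' b') (or_intror erefl)).
Qed.

Lemma par_edge_of_edge_line (z0 a b : pt) : z0 \in cs -> edge cs a b ->
  cross (subp b a) (subp z0 a) = 0 -> cross (subp b a) (mv c d) = 0 ->
  exists z', par_edge c d cs z0 z'.
Proof.
move=> cs_z0 [cs_a cs_b a_neq_b side] z0_on ab_par.
set u := subp b a in z0_on ab_par side; set x := subp z0 a in z0_on.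
have u_neq0 : u != (0, 0) by rewrite subp_neq0 // eq_sym.
have uu_gt0 := dotpp_gt0 u_neq0.
have x_par : cross x u = 0 by rewrite crossC z0_on oppr0.
have x_mv : cross x (mv c d) = 0 := cross_eq0_trans u_neq0 z0_on ab_par.
have scale y : dotp u u * cross x (subp y a) = dotp x u * cross u (subp y a).
  exact: parallel_cross.
have xu_sym : dotp x u = dotp u x by rewrite /dotp mulrC [u.2 * _]mulrC.
have [ahead|behind] := ltP 0 (dotp u u - dotp u x).
  exists b; split; last first.
    have -> : subp b z0 = subp u x by apply: pt_ext; rewrite /u /x /subp /=; ring.
    by rewrite cross_subpl ab_par x_mv subr0.
  left; split => //.
    by apply: contraTneq ahead => z0_b; rewrite /x z0_b -/u subrr ltxx.
  move=> y cs_y.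
  have -> : cross (subp b z0) (subp y z0) = cross u (subp y a) - cross x (subp y a).
    by move: z0_on; rewrite /u /x /cross /subp /=; lra.
  rewrite -(pmulr_rge0 _ uu_gt0) mulrBr scale -mulrBl xu_sym.
  by rewrite mulr_ge0 ?side // ltW.
exists a; split; last first.
  have -> : subp a z0 = subp (0, 0) x by apply: pt_ext; rewrite /x /subp /=; ring.
  by rewrite cross_subpl x_mv subr0 /cross /=; ring.
right; split => //.
  apply: contraTneq behind => a_z0; rewrite -ltNge /x -a_z0.
  have -> : dotp u (subp a a) = 0 by rewrite /dotp /subp /=; ring.
  by rewrite subr0.
move=> y cs_y; rewrite -(pmulr_rge0 _ uu_gt0) scale xu_sym.
by rewrite mulr_ge0 ?side //; lra.
Qed.

Lemma antipode_edge_not_parallel (z0 p a b : pt) : coprimez c d -> z0 \in cs ->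
  ~ (exists z', par_edge c d cs z0 z') -> edge cs a b ->
  cross (subp b a) (subp p a) = 0 -> cross (subp p z0) (mv c d) = 0 ->
  cross (subp b a) (mv c d) != 0.
Proof.
move=> co cs_z0 no_par ab p_ab p_z0; apply/eqP => ab_par; apply: no_par.
apply: (par_edge_of_edge_line cs_z0 ab _ ab_par).
have ba_pz0 : cross (subp b a) (subp p z0) = 0.
  by apply: (cross_eq0_trans (mv_neq0 co)); rewrite crossC ?ab_par ?p_z0 oppr0.
by move/eqP: ba_pz0; rewrite (cross_subp_rebase _ _ _ a) p_ab sub0r oppr_eq0 => /eqP.
Qed.


Lemma corner_antipode_vertex (q : nat) (z0 p a b : pt) : z0 \in cs -> in_hull cs p ->
  edge cs a b -> cross (subp b a) (subp p a) = 0 -> cross (subp b a) (mv c d) != 0 ->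
  cross (subp p z0) (mv c d) = 0 ->
  is_vertex c d cs (fun i : 'I_q => if val i == 0%N then z0 else p).
Proof.
move=> cs_z0 hull_p ab p_ab ab_transv p_z0.
have [a1 [b1 [a2 [b2 [e1 e2 not_par z0_e1 z0_e2]]]]] := corner_two_edges board cs_z0.
split=> [i|]; first by case: ifP => _ //; apply: in_hull_mem.
pose S (k : constr q) := match k with
  | CH i j => val i = 0%N /\ val j <> 0%N
  | CF i x y => (val i = 0%N /\ ((x, y) = (a1, b1) \/ (x, y) = (a2, b2))) \/
                (val i <> 0%N /\ (x, y) = (a, b)) end.
exists S; split.
  case => [i j|i x y] /=; first by move=> [-> /eqP]; rewrite lt0n.
  by move=> [[_ [[-> ->]|[-> ->]]]|[_ [-> ->]]].
move=> w; split => [w_sat|w_eq]; last first.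
  case => [i j [i0 j0]|i x y [[i0 [[-> ->]|[-> ->]]]|[i0 [-> ->]]]] /=; rewrite !w_eq ?i0 //=.
  - by rewrite ifN_eq ?dotp_normal_mv //; apply/eqP.
  - by rewrite ifN_eq //; apply/eqP.
have w_z0 i : val i = 0%N -> w i = z0.
  move=> i0; apply: (meet_lines_uniq not_par _ _ z0_e1 z0_e2).
    exact: (w_sat (CF i a1 b1) (or_introl (conj i0 (or_introl erefl)))).
  exact: (w_sat (CF i a2 b2) (or_introl (conj i0 (or_intror erefl)))).
move=> i; case: eqP => [/w_z0 //|i_neq0].
have q_gt0 : (0 < q)%N := leq_ltn_trans (leq0n i) (ltn_ord i).
have /= := w_sat (CH (Ordinal q_gt0) i) (conj erefl i_neq0).
rewrite (w_z0 (Ordinal q_gt0)) // dotp_normal_mv => wi_z0.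
apply: (meet_lines_uniq (u' := mv c d) (a := a) (a' := z0) ab_transv) => //.
- exact: (w_sat (CF i a b) (or_intror (conj i_neq0 erefl))).
- by rewrite crossC wi_z0 oppr0.
- by rewrite crossC p_z0 oppr0.
Qed.

Lemma par_edge_line_corner (z0 z' x a b : pt) : coprimez c d ->
  par_edge c d cs z0 z' -> edge cs a b -> cross (subp b a) (mv c d) != 0 ->
  in_hull cs x -> cross (subp b a) (subp x a) = 0 -> cross (subp x z0) (mv c d) = 0 ->
  x \in cs.
Proof.
move=> co [z0z' z0z'_par] ab ab_transv hull_x x_ab x_z0.
have mv_z0z' : cross (mv c d) (subp z' z0) = 0 by rewrite crossC z0z'_par oppr0.
have x_on : cross (subp z' z0) (subp x z0) = 0.
  by apply: (cross_eq0_trans (mv_neq0 co)) => //; rewrite crossC x_z0 oppr0.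
have transv : cross (subp b a) (subp z' z0) != 0.
  have z'_neq_z0 : z' != z0 by case: z0z' => -[_ _]; rewrite // eq_sym.
  apply: contra ab_transv => /eqP ab_par; apply/eqP.
  by apply: (cross_eq0_trans (subp_neq0 z'_neq_z0)) => //; rewrite crossC ab_par oppr0.
case: z0z' => e; first exact: (corner_of_edge_lines ab e transv hull_x x_ab x_on).
apply: (corner_of_edge_lines ab e _ hull_x x_ab).
  by move: transv; rewrite /cross /subp /=; apply: contra => /eqP e0; apply/eqP; lra.
by move: x_on; rewrite /cross /subp /=; lra.
Qed.

Lemma vertex_through_corner_or_antipode (q : nat) (p : pt) :
  coprimez c d -> (0 < q)%N ->
  p \in cs \/ ((1 < q)%N /\ exists z0, z0 \in cs /\ antipode c d cs z0 p) ->
  exists (z : 'I_q -> pt) (i : 'I_q), is_vertex c d cs z /\ z i = p.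
Proof.
move=> co q_gt0 p_corner_or_antipode.
have corner_case : p \in cs -> exists (z : 'I_q -> pt) i, is_vertex c d cs z /\ z i = p.
  by move=> cs_p; exists (fun _ => p), (Ordinal q_gt0); split => //; apply: const_corner_vertex.
case: p_corner_or_antipode => [|[q_gt1 [z0 [cs_z0 [[[[_ cs_p _ _]|[cs_p _ _ _]] _]|]]]]];
  try exact: corner_case.
move=> [no_par [[hull_p [a [b [ab p_ab]]]] [_ p_z0]]].
have ab_transv := antipode_edge_not_parallel co cs_z0 no_par ab p_ab p_z0.
exists (fun i : 'I_q => if val i == 0%N then z0 else p), (Ordinal q_gt1).
by split; first exact: corner_antipode_vertex p_ab ab_transv p_z0.
Qed.

End BoardAndMove.

Definition scalep (r : rat) (u : pt) : pt := (r * u.1, r * u.2).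

Lemma cross_scalepl (r : rat) (u v : pt) : cross (scalep r u) v = r * cross u v.
Proof. by rewrite /cross /scalep /=; ring. Qed.

Lemma cross_scalepr (r : rat) (u v : pt) : cross u (scalep r v) = r * cross u v.
Proof. by rewrite /cross /scalep /=; ring. Qed.

Lemma cross0v (v : pt) : cross (0, 0) v = 0.
Proof. by rewrite /cross /=; ring. Qed.

Lemma crossv0 (u : pt) : cross u (0, 0) = 0.
Proof. by rewrite /cross /=; ring. Qed.

Lemma cholds_translate (c d : int) (q : nat) (S : constr q -> Prop) (z t : 'I_q -> pt) :
  (forall k, S k -> cholds c d k z) ->
  (forall i j, S (CH i j) -> cross (subp (t j) (t i)) (mv c d) = 0) ->
  (forall i a b, S (CF i a b) -> cross (subp b a) (t i) = 0) ->
  forall k, S k -> cholds c d k (fun i => z i + t i).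
Proof.
move=> z_sat t_CH t_CF [i j|i a b] Sk; have /= := z_sat _ Sk.
  rewrite !dotp_normal_mv => z_ij.
  have -> : cross (subp (z j + t j) (z i + t i)) (mv c d) =
            cross (subp (z j) (z i)) (mv c d) + cross (subp (t j) (t i)) (mv c d).
    by rewrite /cross /subp /=; ring.
  by rewrite z_ij t_CH // addr0.
move=> z_ab; have -> : cross (subp b a) (subp (z i + t i) a) =
                       cross (subp b a) (subp (z i) a) + cross (subp b a) (t i).
  by rewrite /cross /subp /=; ring.
by rewrite z_ab t_CF // addr0.
Qed.

Section VertexAnalysis.
Variables (c d : int) (cs : seq pt) (q : nat) (S : constr q -> Prop) (z : 'I_q -> pt).
Hypotheses (co : coprimez c d) (z_in : forall i, in_hull cs (z i))
  (S_valid : forall k, S k -> cvalid cs k)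
  (S_pins_z : forall w, (forall k, S k -> cholds c d k w) <-> (forall i, w i = z i)).

Lemma vertex_sat : forall k, S k -> cholds c d k z.
Proof. exact: (S_pins_z z).2. Qed.

Lemma vertex_rigid (t : 'I_q -> pt) :
  (forall i j, S (CH i j) -> cross (subp (t j) (t i)) (mv c d) = 0) ->
  (forall i a b, S (CF i a b) -> cross (subp b a) (t i) = 0) ->
  forall i, t i = (0, 0).
Proof.
move=> t_CH t_CF i; apply: (@addrI _ (z i)).
by rewrite ((S_pins_z _).1 (cholds_translate vertex_sat t_CH t_CF)) addr0.
Qed.

Lemma vertex_transversal_facet (j : 'I_q) :
  exists a b, S (CF j a b) /\ cross (subp b a) (mv c d) != 0.
Proof.
apply: NNPP => no_transv.
pose t i := if i == j then mv c d else (0, 0).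
have t_mv i : cross (t i) (mv c d) = 0 by rewrite /t; case: eqP => _; rewrite ?crossvv ?cross0v.
suff /(_ j) : forall i, t i = (0, 0).
  by rewrite /t eqxx => mv0; move: (mv_neq0 co); rewrite mv0 eqxx.
apply: vertex_rigid => [i1 i2 _|i a b Sab]; first by rewrite cross_subpl !t_mv subrr.
rewrite /t; case: eqP Sab => [-> Sab|_ _]; last exact: crossv0.
have [//|transv] := eqVneq (cross (subp b a) (mv c d)) 0.
by case: no_transv; exists a, b.
Qed.

Lemma vertex_move_line_corner (i : 'I_q) :
  exists j, cross (subp (z j) (z i)) (mv c d) = 0 /\ z j \in cs.
Proof.
apply: NNPP => no_corner.
have /fin_all_exists [f f_transv] : forall j, exists ab : pt * pt,
    S (CF j ab.1 ab.2) /\ cross (subp ab.2 ab.1) (mv c d) != 0.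
  by move=> j; have [a [b ?]] := vertex_transversal_facet j; exists (a, b).
pose u j := subp (f j).2 (f j).1.
pose K j := cross (subp (z j) (z i)) (mv c d) == 0.
pose t j := if K j then scalep (cross (u j) (mv c d))^-1 (u j) else (0, 0).
have t_mv j : cross (t j) (mv c d) = (K j)%:R.
  rewrite /t; case: (K j); last exact: cross0v.
  by rewrite cross_scalepl mulVf //; have [] := f_transv j.
have Ki : K i by rewrite /K crossC cross_subpp oppr0.
suff /(_ i) ti0 : forall j, t j = (0, 0).
  by move: (t_mv i); rewrite ti0 Ki cross0v => /eqP; rewrite eq_sym oner_eq0.
apply: vertex_rigid => [i1 i2 Sk|j a b Sab].
  have /= := vertex_sat Sk; rewrite dotp_normal_mv => z12.
  rewrite cross_subpl !t_mv; suff -> : K i2 = K i1 by rewrite subrr.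
  by move: z12; rewrite /K !cross_subpl => /subr0_eq ->.
rewrite /t; case Kj : (K j); last exact: crossv0.
rewrite cross_scalepr.
have [->|transv] := eqVneq (cross (subp b a) (u j)) 0; first by rewrite mulr0.
exfalso; apply: no_corner; exists j; split; first exact/eqP.
have [Sf _] := f_transv j.
exact: (corner_of_edge_lines (S_valid Sab) (S_valid Sf) transv (z_in j)
  (vertex_sat Sab) (vertex_sat Sf)).
Qed.

Lemma vertex_noncorner_antipode (i : 'I_q) : z i \notin cs ->
  exists j, [/\ i != j, z j \in cs & antipode c d cs (z j) (z i)].
Proof.
move=> zi_notin.
have [j [ji_par cs_zj]] := vertex_move_line_corner i.
have [a [b [Sab ab_transv]]] := vertex_transversal_facet i.
have ab : edge cs a b := S_valid Sab.
have zi_ab : cross (subp b a) (subp (z i) a) = 0 := vertex_sat Sab.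
have zi_zj : cross (subp (z i) (z j)) (mv c d) = 0.
  by move: ji_par; rewrite !cross_subpl => /subr0_eq ->; rewrite subrr.
exists j; split => //; first by apply: contraNneq zi_notin => ->.
have [[z' par]|no_par] := classic (exists z', par_edge c d cs (z j) z').
  by case/negP: zi_notin; apply: par_edge_line_corner co par ab ab_transv (z_in i) zi_ab zi_zj.
right; split => //; split; first by split; [exact: z_in | exists a, b].
by split => // zij; move: zi_notin; rewrite zij cs_zj.
Qed.

End VertexAnalysis.

Lemma ord_neq_gt1 (n : nat) (i j : 'I_n) : i != j -> (1 < n)%N.
Proof.
apply: contraNT; rewrite -leqNgt => n_le1; apply/eqP/val_inj => /=.
move: (leq_trans (ltn_ord i) n_le1) (leq_trans (ltn_ord j) n_le1).
by rewrite !ltnS !leqn0 => /eqP-> /eqP->.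
Qed.

Lemma vertex_point_class (c d : int) (cs : seq pt) (q : nat) (z : 'I_q -> pt) (i : 'I_q) :
  coprimez c d -> is_vertex c d cs z ->
  z i \in cs \/ ((1 < q)%N /\ exists z0, z0 \in cs /\ antipode c d cs z0 (z i)).
Proof.
move=> co [z_in [S [S_valid S_pins_z]]].
have [cs_zi|zi_notin] := boolP (z i \in cs); [by left | right].
have [j [i_neq_j cs_zj anti]] := vertex_noncorner_antipode co z_in S_valid S_pins_z zi_notin.
by split; [exact: ord_neq_gt1 i_neq_j | exists (z j)].
Qed.

Unset Implicit Arguments.

Theorem proposition4p1 (c d : int) (cs : seq pt) (q : nat) :
  coprimez c d -> is_board cs -> (0 < q)%N ->
  exists D : nat,
    lcm_of (fun n => exists z : 'I_q -> pt, is_vertex c d cs z /\ n = denq_cfg z) D /\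
    lcm_of (fun n => exists p,
              (p \in cs \/
               ((1 < q)%N /\ exists z, z \in cs /\ antipode c d cs z p)) /\
              n = den2 p) D.
Proof.
move=> co board q_gt0.
set points := (fun n => exists p, _).
have [D D_lcm] := lcm_of_exists points.
exists D; split => // m; rewrite D_lcm.
split => [vertex_dvd n [p [p_point ->]]|point_dvd n [z [vz ->]]].
  have [z [i [vz <-]]] := vertex_through_corner_or_antipode board co q_gt0 p_point.
  by apply: dvdn_trans (den2_dvd_denq_cfg z i) _; apply: vertex_dvd; exists z.
apply/dvdn_biglcmP => i _; apply: point_dvd; exists (z i); split => //.
exact: vertex_point_class.
Qed.
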